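(* Let $d\ge2$, $\omega=e^{2\pi\mathrm{i}/d}$, $\omega^x=e^{2\pi\mathrm{i}x/d}$ for real $x$, and $a_k=\frac{1-\mathrm{i}}{2}\omega^{k/4}$ for $k=1,\dots,d-1$. Let $B_1,B_2$ be unitary operators on a finite-dimensional Hilbert space whose eigenvalues lie in $\{\omega^l: l=0,\dots,d-1\}$. Define, for $k=1,\dots,d-1$, $$C_1^{(k)}=a_kB_1^{-k}+a_k^*\omega^kB_2^{-k},\qquad C_2^{(k)}=a_k^*B_1^{-k}+a_kB_2^{-k}.$$ Suppose that for $i=1,2$ and all $k=1,\dots,d-1$: $C_i^{(k)}=\big[C_i^{(1)}\big]^k$ and $C_i^{(d-k)}C_i^{(k)}=\mathbb{1}$. Then for every positive integer $n<d$ dividing $d$, $\operatorname{Tr}(B_1^n)=\operatorname{Tr}(B_2^n)=0$. *)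

From HB Require Import structures.
From mathcomp Require Import all_boot all_order all_algebra.
From mathcomp Require Import reals.
From mathcomp Require Import complex.
From mathcomp Require Import trigo.
Set Implicit Arguments. Unset Strict Implicit. Unset Printing Implicit Defensive.
Import Order.TTheory GRing.Theory Num.Theory.
Local Open Scope ring_scope.
Local Open Scope complex_scope.

Section Defs.
Variable R : realType.

Definition omega_pow (d : nat) (x : R) : R[i] :=
  (cos (2 * pi * x / d%:R)) +i* (sin (2 * pi * x / d%:R)).

Definition acoef (d k : nat) : R[i] :=
  ((1 - 'i) / 2%:R) * omega_pow d (k%:R / 4%:R).

Definition adjmx (m : nat) (A : 'M[R[i]]_m) : 'M[R[i]]_m := (map_mx conjc A)^T.

Definition unitary_cmx (m : nat) (A : 'M[R[i]]_m) : Prop :=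
  A *m adjmx A = 1%:M /\ adjmx A *m A = 1%:M.

Definition spectrum_in_roots (d m : nat) (B : 'M[R[i]]_m) : Prop :=
  forall lam : R[i], eigenvalue B lam ->
    exists l : nat, (l < d)%N /\ lam = omega_pow d l%:R.

Definition Cop1 (d m k : nat) (B1 B2 : 'M[R[i]]_m) : 'M[R[i]]_m :=
  acoef d k *: (invmx B1) ^+ k
  + ((acoef d k)^* * omega_pow d k%:R) *: (invmx B2) ^+ k.

Definition Cop2 (d m k : nat) (B1 B2 : 'M[R[i]]_m) : 'M[R[i]]_m :=
  (acoef d k)^* *: (invmx B1) ^+ k + acoef d k *: (invmx B2) ^+ k.

End Defs.

From HB Require Import structures.
From mathcomp Require Import all_boot all_order all_algebra.
From mathcomp Require Import reals complex trigo.
From mathcomp Require Import ring.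
Set Implicit Arguments. Unset Strict Implicit. Unset Printing Implicit Defensive.
Import Order.TTheory GRing.Theory Num.Theory.
Local Open Scope ring_scope.
Local Open Scope complex_scope.

(* Put t = omega^(1/4), so that a_k = u t^k with u = (1 - i)/2, and let
   a = t^* B1^-1, b = t B2^-1.  Then C_2^(k) = u^* a^k + u b^k and, as
   u^* + u = 1, C_2^(j) C_2^(k) = C_2^(j+k) - u^* u (a^j - b^j)(a^k - b^k).
   A unitary matrix with spectrum in the d-th roots of unity satisfies B^d = 1,
   and t^d = i, so C_2^(d) = 1 and a^d + b^d = 0; the hypotheses on C_2 thus
   force (a^j - b^j)(a^k - b^k) = 0 whenever j + k <= d.  This gives
   (a + b)^k = 2^(k-1) (a^k + b^k) for k <= d, so a + b is nilpotent and
   tr (a^n + b^n) = 0; for a proper divisor n of d also 2n <= d, so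
   (a^n - b^n)^2 = 0 and tr (a^n - b^n) = 0.  Hence tr a^n = tr b^n = 0,
   and tr B1^n is the conjugate of tr B1^-n = t^n tr a^n (likewise for B2). *)

Lemma eigenvalue_nilpotent (F : fieldType) n (N : 'M[F]_n) k z :
  N ^+ k = 0 -> eigenvalue N z -> z = 0.
Proof.
move=> Nk0 /eigenvalueP[v vN v_neq0].
have vNX j : v *m N ^+ j = z ^+ j *: v.
  elim: j => [|j IHj]; first by rewrite expr0 scale1r mulmx1.
  by rewrite exprSr -mulmxE mulmxA IHj -scalemxAl vN scalerA -exprSr.
have /eqP := vNX k; rewrite Nk0 mulmx0 eq_sym scaler_eq0 (negbTE v_neq0) orbF.
by rewrite expf_eq0 => /andP[_ /eqP].
Qed.

Lemma char_poly_nilpotent (F : closedFieldType) n (N : 'M[F]_n) k :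
  N ^+ k = 0 -> char_poly N = 'X^n.
Proof.
move=> Nk0; have [r charN] := closed_field_poly_normal (char_poly N).
rewrite (monicP (char_poly_monic N)) scale1r in charN.
have r0 : {in r, forall z, 'X - z%:P = 'X :> {poly F}}.
  move=> z zr; suff -> : z = 0 by rewrite subr0.
  apply: (eigenvalue_nilpotent Nk0).
  by rewrite eigenvalue_root_char charN root_prod_XsubC.
have := size_char_poly N.
rewrite charN (eq_big_seq _ r0) big_const_seq count_predT iter_mulr_1.
by rewrite size_polyXn => -[->].
Qed.

Lemma mxtrace_nilpotent (F : closedFieldType) n (N : 'M[F]_n) k :
  N ^+ k = 0 -> \tr N = 0.
Proof.
case: n N => [|n] N Nk0; first by rewrite [N]thinmx0 mxtrace0.
apply/eqP; rewrite -oppr_eq0 -char_poly_trace // (char_poly_nilpotent Nk0).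
by rewrite coefXn eqn_leq ltnn andbF.
Qed.

Lemma mulrDD_add_mulrBB (V : pzRingType) (x y z w : V) :
  (x + y) * (z + w) + (x - y) * (z - w) = (x * z + y * w) *+ 2.
Proof.
rewrite mulrDl mulrBl !mulrBr !mulrDr opprB addrACA (addrACA (x * z)) subrr addr0.
by rewrite (addrC (y * w) (- _)) (addrACA (y * z)) subrr add0r mulr2n addrACA.
Qed.

Definition orthogonal_powdiff (V : pzRingType) (d : nat) (a b : V) :=
  forall j k, (0 < j)%N -> (0 < k)%N -> (j + k <= d)%N ->
    (a ^+ j - b ^+ j) * (a ^+ k - b ^+ k) = 0.

Lemma exprD_orthogonal_powdiff (V : pzRingType) d (a b : V) k :
  orthogonal_powdiff d a b -> (0 < k <= d)%N ->
  (a + b) ^+ k = (a ^+ k + b ^+ k) *+ 2 ^ k.-1.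
Proof.
move=> orth_ab; elim: k => [//|k IHk] /andP[_ kd].
case: k IHk kd => [|k] IHk kd; first by rewrite !expr1.
rewrite exprSr IHk ?(ltnW kd) // expnS mulrnA mulrnAl; congr (_ *+ _).
rewrite -[a + b]expr1 -(addr0 (_ * _)) -(orth_ab k.+1 1) ?addn1 //.
by rewrite mulrDD_add_mulrBB -!exprSr.
Qed.

Lemma mxtrace_orthogonal_powdiff (C : numClosedFieldType) m d (a b : 'M[C]_m) n :
  orthogonal_powdiff d a b -> a ^+ d + b ^+ d = 0 -> (0 < n)%N -> (n + n <= d)%N ->
  \tr (a ^+ n) = 0 /\ \tr (b ^+ n) = 0.
Proof.
move=> orth_ab abd0 n_gt0 nnd.
have trMn_eq0 (x : C) k : x *+ k.+1 = 0 -> x = 0.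
  by move=> /eqP; rewrite mulrn_eq0 => /eqP.
have d_gt0 : (0 < d)%N by apply: leq_trans nnd; rewrite addn_gt0 n_gt0.
have tr_add : \tr (a ^+ n + b ^+ n) = 0.
  apply: (trMn_eq0 _ (2 ^ n.-1).-1); rewrite prednK ?expn_gt0 // -raddfMn /=.
  rewrite -(exprD_orthogonal_powdiff orth_ab) ?n_gt0 ?(leq_trans (leq_addr n n)) //.
  apply: (mxtrace_nilpotent (k:=d)); rewrite -exprM mulnC exprM.
  rewrite (exprD_orthogonal_powdiff orth_ab) ?d_gt0 ?leqnn //.
  by rewrite abd0 mul0rn expr0n gtn_eqF.
have tr_sub : \tr (a ^+ n - b ^+ n) = 0.
  by apply: (mxtrace_nilpotent (k:=2)); rewrite expr2 orth_ab.
split; apply: (trMn_eq0 _ 1); rewrite -raddfMn /= mulr2n.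
  have -> : a ^+ n + a ^+ n = (a ^+ n + b ^+ n) + (a ^+ n - b ^+ n).
    by rewrite addrACA subrr addr0.
  by rewrite mxtraceD tr_add tr_sub addr0.
have -> : b ^+ n + b ^+ n = (a ^+ n + b ^+ n) - (a ^+ n - b ^+ n).
  by rewrite opprB addrA addrAC (addrAC (a ^+ n)) subrr add0r.
by rewrite raddfB /= tr_add tr_sub subr0.
Qed.

Lemma mul_affine_combination (F : comPzRingType) (A : algType F) (x y : F)
    (p q r s : A) : x + y = 1 ->
  (x *: p + y *: q) * (x *: r + y *: s) =
    x *: (p * r) + y *: (q * s) - (x * y) *: ((p - q) * (r - s)).
Proof.
move=> xy1.
have xx : x * x = x - x * y by rewrite -[X in X - _]mulr1 -xy1 mulrDr addrK.
have yy : y * y = y - x * y.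
  by rewrite (mulrC x y) -[X in X - _]mulr1 -xy1 (addrC x y) mulrDr addrK.
rewrite [in RHS]mulrBl ![in RHS]mulrBr !scalerBr.
rewrite mulrDl !mulrDr -!scalerAl -!scalerAr !scalerA xx yy (mulrC y x) !scalerBl.
by rewrite !opprB [LHS](AC (3*(1*2)) (1*5*(4*6*(3*2)))).
Qed.

Lemma scalemxXn (F : comPzRingType) m (c : F) (A : 'M[F]_m) k :
  (c *: A) ^+ k = c ^+ k *: A ^+ k.
Proof.
elim: k => [|k IHk]; first by rewrite !expr0 scale1r.
by rewrite !exprS IHk -!mulmxE -scalemxAl -scalemxAr scalerA.
Qed.

Lemma mxtrace_scaleX_eq0 (F : fieldType) m (c : F) (A : 'M[F]_m) n :
  c != 0 -> \tr ((c *: A) ^+ n) = 0 -> \tr (A ^+ n) = 0.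
Proof.
move=> c_neq0 /eqP; rewrite scalemxXn mxtraceZ mulf_eq0 expf_eq0 (negbTE c_neq0) andbF.
by move=> /eqP.
Qed.

Lemma eigenvalue_spectral_diag (C : numClosedFieldType) n (A : 'M[C]_n) j :
  A \is normalmx -> eigenvalue A (spectral_diag A 0 j).
Proof.
move=> A_normal; set P := spectralmx A; set s := spectral_diag A.
have defA : A = invmx P *m diag_mx s *m P by apply/orthomx_spectralP.
have P_unit : P \in unitmx := spectral_unit A.
apply/eigenvalueP; exists (delta_mx 0 j *m P).
  by rewrite [in LHS]defA !mulmxA mulmxK // -[in LHS]rowE row_diag_mx -scalemxAl.
rewrite mulmx_free_eq0 ?row_free_unit //.
by apply/eqP => /matrixP/(_ 0 j)/eqP; rewrite !mxE !eqxx oner_eq0.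
Qed.

Lemma normalmx_horner_eq0 (C : numClosedFieldType) n (A : 'M[C]_n.+1) (p : {poly C}) :
  A \is normalmx -> (forall z, eigenvalue A z -> root p z) -> horner_mx A p = 0.
Proof.
move=> A_normal p_roots.
have defA : A = invmx (spectralmx A) *m diag_mx (spectral_diag A) *m spectralmx A.
  by apply/orthomx_spectralP.
rewrite defA horner_mx_uconjC ?spectral_unit // horner_mx_diag.
suff -> : map_mx (horner p) (spectral_diag A) = 0 by rewrite linear0 mulmx0 mul0mx.
apply/rowP => j; rewrite !mxE; apply/eqP.
exact/p_roots/eigenvalue_spectral_diag.
Qed.

Lemma normalmx_exp_eq1 (C : numClosedFieldType) n (A : 'M[C]_n) d :
  A \is normalmx -> (forall z, eigenvalue A z -> z ^+ d = 1) -> A ^+ d = 1.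
Proof.
case: n A => [|n] A A_normal Ad; first by rewrite thinmx0 [RHS]thinmx0.
apply/eqP; rewrite -subr_eq0; apply/eqP.
have := normalmx_horner_eq0 (p := 'X^d - 1) A_normal.
rewrite rmorphB rmorphXn rmorph1 /= horner_mx_X; apply=> z /Ad zd.
by rewrite rootE !hornerE zd subrr.
Qed.

Section RootsOfUnity.
Variable R : realType.
Implicit Types (d : nat) (x y : R).

Lemma omega_powD d x y : omega_pow d x * omega_pow d y = omega_pow d (x + y).
Proof.
rewrite /omega_pow.
have -> : 2 * pi * (x + y) / d%:R = 2 * pi * x / d%:R + 2 * pi * y / d%:R.
  by rewrite mulrDr mulrDl.
by rewrite cosD sinD; simpc; rewrite [sin _ * cos _ + _]addrC.
Qed.

Lemma omega_pow0 d : omega_pow d 0 = 1 :> R[i].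
Proof. by rewrite /omega_pow mulr0 mul0r cos0 sin0. Qed.

Lemma omega_powX d x k : omega_pow d x ^+ k = omega_pow d (x *+ k).
Proof.
elim: k => [|k IHk]; first by rewrite expr0 mulr0n omega_pow0.
by rewrite exprS IHk omega_powD mulrS.
Qed.

Lemma omega_pow_nat_expd d (l : nat) : (0 < d)%N -> omega_pow d l%:R ^+ d = 1 :> R[i].
Proof.
move=> d_gt0; rewrite omega_powX /omega_pow.
have -> : 2 * pi * (l%:R *+ d) / d%:R = 0 + (pi *+ 2) *+ l :> R.
  rewrite add0r -[l%:R *+ d]mulr_natl -[(pi *+ 2) *+ l]mulr_natl -[pi *+ 2]mulr_natl.
  by field; rewrite pnatr_eq0 -lt0n.
by rewrite (periodicn (@cosD2pi R)) (periodicn (@sinD2pi R)) cos0 sin0.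
Qed.

Lemma omega_pow_quarter_expd d : (0 < d)%N -> omega_pow d 4^-1 ^+ d = 'i :> R[i].
Proof.
move=> d_gt0; rewrite omega_powX /omega_pow.
have -> : 2 * pi * (4^-1 *+ d) / d%:R = pi / 2 :> R.
  by rewrite -[4^-1 *+ d]mulr_natl; field; rewrite pnatr_eq0 -lt0n.
by rewrite cos_pihalf sin_pihalf.
Qed.

Lemma acoefE d k : acoef R d k = (1 - 'i) / 2 * omega_pow d 4^-1 ^+ k.
Proof. by rewrite /acoef omega_powX mulr_natl. Qed.

End RootsOfUnity.

Section UnitaryMatrices.
Variables (R : realType) (m : nat).
Implicit Types (A B : 'M[R[i]]_m).

Lemma adjmx1 : adjmx (1%:M : 'M[R[i]]_m) = 1%:M.
Proof. by rewrite /adjmx map_mx1 trmx1. Qed.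

Lemma adjmxM A B : adjmx (A *m B) = adjmx B *m adjmx A.
Proof. by rewrite /adjmx map_mxM trmx_mul. Qed.

Lemma adjmxX A k : adjmx (A ^+ k) = adjmx A ^+ k.
Proof.
elim: k => [|k IHk]; first by rewrite !expr0 adjmx1.
by rewrite exprSr -mulmxE adjmxM IHk exprS.
Qed.

Lemma mxtrace_adjmx A : \tr (adjmx A) = (\tr A)^*.
Proof. by rewrite /adjmx mxtrace_tr (trace_map_mx conjc). Qed.

Lemma invmx_unitary_cmx B : unitary_cmx B -> invmx B = adjmx B.
Proof.
case=> BBt BtB; have [B_unit _] := mulmx1_unit BBt.
by rewrite -[RHS]mul1mx -(mulVmx B_unit) -mulmxA BBt mulmx1.
Qed.

Lemma unitary_cmx_normal B : unitary_cmx B -> B \is normalmx.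
Proof. by case=> BBt BtB; apply/normalmxP; rewrite -map_trmx BBt BtB. Qed.

Lemma invmx_unitary_cmx_expd d B : (0 < d)%N ->
  unitary_cmx B -> spectrum_in_roots d B -> invmx B ^+ d = 1.
Proof.
move=> d_gt0 B_unitary B_roots; have Bd : B ^+ d = 1.
  apply: normalmx_exp_eq1 (unitary_cmx_normal B_unitary) _ => z /B_roots[l [_ ->]].
  exact: omega_pow_nat_expd.
by rewrite invmx_unitary_cmx // -adjmxX Bd adjmx1.
Qed.

Lemma mxtrace_expn_unitary_cmx B n : unitary_cmx B ->
  \tr (B ^+ n) = (\tr (invmx B ^+ n))^*.
Proof.
by move=> B_unitary; rewrite invmx_unitary_cmx // -adjmxX mxtrace_adjmx conjcK.
Qed.

End UnitaryMatrices.

Section SecondObservable.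
Variables (R : realType) (d m : nat) (B1 B2 : 'M[R[i]]_m.+1).

Local Notation t := (omega_pow d (4^-1 : R)).
Local Notation u := ((1 - 'i) / 2 : R[i]).
Local Notation a := (t^* *: invmx B1).
Local Notation b := (t *: invmx B2).
Local Notation C k := (Cop2 d k B1 B2).

Lemma Cop2E k : C k = u^* *: a ^+ k + u *: b ^+ k.
Proof. by rewrite /Cop2 acoefE rmorphM rmorphXn !exprZn !scalerA. Qed.

Lemma Cop2M j k :
  C j * C k = C (j + k) - (u^* * u) *: ((a ^+ j - b ^+ j) * (a ^+ k - b ^+ k)).
Proof.
rewrite !Cop2E (@mul_affine_combination _ 'M[R[i]]_m.+1) ?exprD //.
by simpc; apply/eqP; rewrite eq_complex /= eqxx andbT; apply/eqP; field.
Qed.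

Hypotheses (d_gt0 : (0 < d)%N) (B1d : invmx B1 ^+ d = 1) (B2d : invmx B2 ^+ d = 1).

Lemma expd_add_eq0 : a ^+ d + b ^+ d = 0.
Proof.
rewrite !exprZn B1d B2d -(rmorphXn (@conjc R)) omega_pow_quarter_expd // -scalerDl.
suff -> : ('i : R[i])^* + 'i = 0 by rewrite scale0r.
by simpc; apply/eqP; rewrite eq_complex /= addNr !eqxx.
Qed.

Lemma Cop2_d_eq1 : C d = 1.
Proof.
rewrite Cop2E !exprZn B1d B2d -(rmorphXn (@conjc R)) omega_pow_quarter_expd //.
rewrite !scalerA -scalerDl.
suff -> : u^* * 'i^* + u * 'i = 1 by rewrite scale1r.
by simpc; apply/eqP; rewrite eq_complex /=; apply/andP; split; apply/eqP; field.
Qed.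

Lemma Cop2_orthogonal_powdiff :
  (forall k, (1 <= k <= d - 1)%N -> C k = C 1 ^+ k) ->
  (forall k, (1 <= k <= d - 1)%N -> C (d - k) *m C k = 1%:M) ->
  orthogonal_powdiff d a b.
Proof.
move=> C_pow C_inv j k j_gt0 k_gt0 jkd.
have in_range l : (0 < l)%N -> (l < d)%N -> (1 <= l <= d - 1)%N.
  by move=> l_gt0 l_lt_d; rewrite l_gt0 leq_subRL ?add1n // ltnW.
have CjCk : C j * C k = C (j + k).
  case: ltngtP jkd => // [jk_lt_d | jk_eq_d] _.
    have j_lt_d : (j < d)%N by rewrite (leq_ltn_trans _ jk_lt_d) ?leq_addr.
    have k_lt_d : (k < d)%N by rewrite (leq_ltn_trans _ jk_lt_d) ?leq_addl.
    have jk_gt0 : (0 < j + k)%N by rewrite addn_gt0 j_gt0.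
    by rewrite (C_pow j) ?(C_pow k) ?(C_pow (j + k)) ?in_range // exprD.
  have k_lt_d : (k < d)%N by rewrite -jk_eq_d -addn1 addnC leq_add2r.
  have -> : j = (d - k)%N by rewrite -jk_eq_d addnK.
  by rewrite subnK ?(ltnW k_lt_d) // -mulmxE C_inv ?in_range // Cop2_d_eq1.
have u_neq0 : u^* * u != 0.
  rewrite mulf_eq0 conjc_eq0 orbb mulf_eq0 invr_eq0 pnatr_eq0 orbF subr_eq0.
  by rewrite eq_complex /= negb_and orbC eq_sym oner_eq0.
have /eqP := Cop2M j k; rewrite CjCk -subr_eq0 opprB addrC subrK scaler_eq0.
by rewrite (negbTE u_neq0) => /eqP.
Qed.

Lemma mxtrace_invmx_expn_eq0 n :
  (forall k, (1 <= k <= d - 1)%N -> C k = C 1 ^+ k) ->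
  (forall k, (1 <= k <= d - 1)%N -> C (d - k) *m C k = 1%:M) ->
  (0 < n)%N -> (n + n <= d)%N ->
  \tr (invmx B1 ^+ n) = 0 /\ \tr (invmx B2 ^+ n) = 0.
Proof.
move=> C_pow C_inv n_gt0 nnd.
have t_neq0 : t != 0.
  have : t ^+ d != 0 by rewrite omega_pow_quarter_expd // eq_complex /= oner_eq0 andbF.
  by rewrite expf_eq0 d_gt0.
have conj_t_neq0 : t^* != 0 by rewrite conjc_eq0.
have [] := mxtrace_orthogonal_powdiff (Cop2_orthogonal_powdiff C_pow C_inv)
  expd_add_eq0 n_gt0 nnd.
move=> /(mxtrace_scaleX_eq0 conj_t_neq0) tr1 /(mxtrace_scaleX_eq0 t_neq0) tr2.
exact: conj tr1 tr2.
Qed.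

End SecondObservable.

Lemma dvdn_double_leq n d : (0 < d)%N -> (n < d)%N -> (n %| d)%N -> (n.*2 <= d)%N.
Proof.
move=> d_gt0 n_lt_d /dvdnP[[|[|q]] def_d]; rewrite {}def_d in d_gt0 n_lt_d *.
- by rewrite mul0n in d_gt0.
- by rewrite mul1n ltnn in n_lt_d.
by rewrite -mul2n leq_mul2r orbT.
Qed.

Theorem lemma1 (R : realType) (d m : nat) (hd : (2 <= d)%N)
  (B1 B2 : 'M[R[i]]_m)
  (hU1 : unitary_cmx B1) (hU2 : unitary_cmx B2)
  (hS1 : spectrum_in_roots d B1) (hS2 : spectrum_in_roots d B2)
  (hC1pow : forall k : nat, (1 <= k <= d - 1)%N ->
     Cop1 d k B1 B2 = (Cop1 d 1 B1 B2) ^+ k)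
  (hC2pow : forall k : nat, (1 <= k <= d - 1)%N ->
     Cop2 d k B1 B2 = (Cop2 d 1 B1 B2) ^+ k)
  (hC1inv : forall k : nat, (1 <= k <= d - 1)%N ->
     Cop1 d (d - k) B1 B2 *m Cop1 d k B1 B2 = 1%:M)
  (hC2inv : forall k : nat, (1 <= k <= d - 1)%N ->
     Cop2 d (d - k) B1 B2 *m Cop2 d k B1 B2 = 1%:M) :
  forall n : nat, (0 < n < d)%N -> (n %| d)%N ->
    \tr (B1 ^+ n) = 0 /\ \tr (B2 ^+ n) = 0.
Proof.
move=> n /andP[n_gt0 n_lt_d] n_dvd_d.
have d_gt0 : (0 < d)%N by apply: leq_trans hd.
case: m => [|m] in B1 B2 hU1 hU2 hS1 hS2 hC1pow hC2pow hC1inv hC2inv *.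
  by rewrite [B1 ^+ n]thinmx0 [B2 ^+ n]thinmx0 mxtrace0.
have nnd : (n + n <= d)%N by rewrite addnn dvdn_double_leq.
have [tr1 tr2] := mxtrace_invmx_expn_eq0 d_gt0 (invmx_unitary_cmx_expd d_gt0 hU1 hS1)
  (invmx_unitary_cmx_expd d_gt0 hU2 hS2) hC2pow hC2inv n_gt0 nnd.
rewrite (mxtrace_expn_unitary_cmx n hU1) (mxtrace_expn_unitary_cmx n hU2).
by rewrite tr1 tr2 conjc0.
Qed.
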